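(* Let $n\ge2$, let $a_1,\dots,a_n$ be real numbers, $C(t)=\sum_{j=1}^n a_j\cos jt$, $S(t)=\sum_{j=1}^n a_j\sin jt$, and suppose $S(t_1)=0$ with $t_1\in(0,\pi)$. Define $a^{(1)}_1,\dots,a^{(1)}_{n-1}$ by setting $a^{(1)}_n=a^{(1)}_{n+1}=0$ and, for $k=n,n-1,\dots,2$ (in this order), $$a^{(1)}_{k-1}=2a_k+2\cos t_1\, a^{(1)}_k-a^{(1)}_{k+1}.$$ Then $$C(\pi)=-\frac{a^{(1)}_1}{2}-(1+\cos t_1)\sum_{j=1}^{n-1}(-1)^j a^{(1)}_j .$$ *)

From Stdlib Require Import Reals.
Open Scope R_scope.

Fixpoint sum1 (m : nat) (f : nat -> R) : R :=
  match m with
  | O => 0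
  | S m' => sum1 m' f + f (S m')
  end.

(* Auxiliary: c m = a^{(1)}_{n+1-m}, computed in the order k = n, n-1, ... *)
Fixpoint rec_aux (n : nat) (a : nat -> R) (t1 : R) (m : nat) : R * R :=
  (* returns (c m, c (m+1)) *)
  match m with
  | O => (0, 0)
  | S m' =>
      let (cm', cm) := rec_aux n a t1 m' in
      (* c (m'+2) = a^{(1)}_{n-1-m'} = 2 a_{n-m'} + 2 cos t1 c(m'+1) - c m' *)
      (cm, 2 * a (n - m')%nat + 2 * cos t1 * cm - cm')
  end.

(* a1 n a t1 k = a^{(1)}_k for 1 <= k <= n+1 *)
Definition a1 (n : nat) (a : nat -> R) (t1 : R) (k : nat) : R :=
  fst (rec_aux n a t1 (n + 1 - k)%nat).

Definition Csum (n : nat) (a : nat -> R) (t : R) : R :=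
  sum1 n (fun j => a j * cos (INR j * t)).
Definition Ssum (n : nat) (a : nat -> R) (t : R) : R :=
  sum1 n (fun j => a j * sin (INR j * t)).

(* Put a^(1)_0 := 2 a_1 + 2 cos t1 a^(1)_1 - a^(1)_2, so that
   2 a_k = a^(1)_(k-1) + a^(1)_(k+1) - 2 cos t1 a^(1)_k for 1 <= k <= n, with
   a^(1)_n = a^(1)_(n+1) = 0.  For any weights w_k with
   w_(k+1) + w_(k-1) = d w_k, summation by parts gives
   2 sum a_k w_k = (d - 2 cos t1) sum a^(1)_k w_k + a^(1)_0 w_1 - a^(1)_1 w_0.
   With w_k = sin (k t1) and d = 2 cos t1 this reads 2 S(t1) = a^(1)_0 sin t1,
   so a^(1)_0 = 0; with w_k = cos (k pi) = (-1)^k and d = -2 it is the claim. *)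

From Stdlib Require Import Reals Lra Lia.
Open Scope R_scope.

Lemma sum1_ext (m : nat) (f g : nat -> R) :
  (forall j, (1 <= j <= m)%nat -> f j = g j) -> sum1 m f = sum1 m g.
Proof.
  induction m as [|m IH]; intros Hfg; simpl; [reflexivity|].
  rewrite IH by (intros; apply Hfg; lia).
  rewrite (Hfg (S m)) by lia. reflexivity.
Qed.

Lemma sum1_scal (m : nat) (r : R) (f : nat -> R) :
  sum1 m (fun j => r * f j) = r * sum1 m f.
Proof. induction m as [|m IH]; simpl; [ring|rewrite IH; ring]. Qed.

Lemma sum1_by_parts_recurrence (b w : nat -> R) (c d : R) (N : nat) :
  (forall k, w (S (S k)) + w k = d * w (S k)) ->
  sum1 N (fun k => (b (pred k) + b (S k) - c * b k) * w k) =
  (d - c) * sum1 N (fun k => b k * w k)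
  + b O * w 1%nat - b 1%nat * w O + b (S N) * w N - b N * w (S N).
Proof.
  intros Hw. induction N as [|N IH]; cbn [sum1 pred]; [ring|].
  rewrite IH. pose proof (Hw N) as HwN. nra.
Qed.

Lemma sin_mult_recurrence (t : R) (k : nat) :
  sin (INR (S (S k)) * t) + sin (INR k * t) = 2 * cos t * sin (INR (S k) * t).
Proof.
  replace (INR (S (S k)) * t) with (INR (S k) * t + t) by (rewrite !S_INR; ring).
  replace (INR k * t) with (INR (S k) * t - t) by (rewrite S_INR; ring).
  rewrite sin_plus, sin_minus. ring.
Qed.

Lemma cos_INR_mult_PI (k : nat) : cos (INR k * PI) = (-1) ^ k.
Proof.
  induction k as [|k IH]; cbn [pow].
  - rewrite Rmult_0_l, cos_0. reflexivity.
  - rewrite S_INR, Rmult_plus_distr_r, Rmult_1_l, cos_plus, cos_PI, sin_PI, IH.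
    ring.
Qed.

Section DerivedCoefficients.

Variables (n : nat) (a : nat -> R) (t1 : R).

Let b := a1 n a t1.

Lemma a1_n : b n = 0.
Proof. unfold b, a1. replace (n + 1 - n)%nat with 1%nat by lia. reflexivity. Qed.

Lemma a1_Sn : b (S n) = 0.
Proof. unfold b, a1. replace (n + 1 - S n)%nat with O by lia. reflexivity. Qed.

Hypothesis n_gt0 : (1 <= n)%nat.

(* Also valid for k = 1, where it defines a^(1)_0 = fst (rec_aux (n + 1)). *)
Lemma a1_recurrence (k : nat) : (1 <= k <= n)%nat ->
  2 * a k = b (pred k) + b (S k) - 2 * cos t1 * b k.
Proof.
  intros Hk. unfold b, a1.
  replace (n + 1 - pred k)%nat with (S (S (n - k))) by lia.
  replace (n + 1 - k)%nat with (S (n - k)) by lia.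
  replace (n + 1 - S k)%nat with (n - k)%nat by lia.
  cbn [rec_aux]. destruct (rec_aux n a t1 (n - k)) as [p q]; cbn [fst].
  replace (n - (n - k))%nat with k by lia. ring.
Qed.

Lemma twice_weighted_sum (w : nat -> R) (d : R) :
  (forall k, w (S (S k)) + w k = d * w (S k)) ->
  2 * sum1 n (fun k => a k * w k) =
  (d - 2 * cos t1) * sum1 n (fun k => b k * w k) + b O * w 1%nat - b 1%nat * w O.
Proof.
  intros Hw.
  rewrite <- sum1_scal.
  rewrite (sum1_ext n _ (fun k => (b (pred k) + b (S k) - 2 * cos t1 * b k) * w k)).
  2:{ intros k Hk. rewrite <- a1_recurrence by exact Hk. ring. }
  rewrite (sum1_by_parts_recurrence b w _ d n Hw), a1_n, a1_Sn. ring.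
Qed.

End DerivedCoefficients.

Theorem corollary2 (n : nat) (a : nat -> R) (t1 : R) :
  (2 <= n)%nat ->
  0 < t1 < PI ->
  Ssum n a t1 = 0 ->
  Csum n a PI =
    - a1 n a t1 1 / 2
    - (1 + cos t1) * sum1 (n - 1) (fun j => (-1) ^ j * a1 n a t1 j).
Proof.
  intros Hn Ht HS.
  assert (Hn1 : (1 <= n)%nat) by lia.
  assert (Ha0 : a1 n a t1 O = 0).
  { pose proof (twice_weighted_sum n a t1 Hn1 (fun k => sin (INR k * t1)) _
                  (sin_mult_recurrence t1)) as Hsin.
    change (sum1 n (fun k => a k * _)) with (Ssum n a t1) in Hsin. rewrite HS in Hsin.
    change (INR 1) with 1 in Hsin. change (INR 0) with 0 in Hsin.
    rewrite Rmult_1_l, Rmult_0_l, sin_0, Rminus_diag in Hsin.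
    assert (0 < sin t1) by (apply sin_gt_0; lra). nra. }
  assert (Hcos : 2 * Csum n a PI =
            (-2 - 2 * cos t1) * sum1 n (fun k => a1 n a t1 k * (-1) ^ k)
            + a1 n a t1 O * (-1) ^ 1 - a1 n a t1 1 * (-1) ^ 0).
  { rewrite <- (twice_weighted_sum n a t1 Hn1 (fun k => (-1) ^ k) (-2))
      by (intros k; cbn [pow]; ring).
    unfold Csum. f_equal. apply sum1_ext. intros k _. now rewrite cos_INR_mult_PI. }
  destruct n as [|m]; [lia|]. replace (S m - 1)%nat with m by lia.
  cbn [sum1] in Hcos. rewrite a1_n, Ha0 in Hcos.
  rewrite (sum1_ext m _ (fun k => a1 (S m) a t1 k * (-1) ^ k))
    by (intros; apply Rmult_comm).
  lra.
Qed.
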